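(* Let $d\ge1$ and let $G$ be a $d$-regular triangle-free graph on $n$ vertices. Then for every $\lambda>0$, \[ \frac1n\log P_G(\lambda)\;\le\;\frac{1}{2d}\log P_{K_{d,d}}(\lambda)=\frac{1}{2d}\log\big(2(1+\lambda)^d-1\big). \] In particular ($\lambda=1$), $G$ has at most $\big(2^{d+1}-1\big)^{n/(2d)}$ independent sets.
   Context: For a graph $H$ and $\lambda>0$, $P_H(\lambda)=\sum_J\lambda^{|J|}$ summed over all independent sets $J$ of $H$ (including the empty set). $K_{d,d}$ is the complete bipartite graph with parts of size $d$. Logarithms are natural. *)

From Stdlib Require Import Reals List Arith Bool.
Import ListNotations.
Open Scope R_scope.

(* A graph on vertex set {0,...,n-1} is given by adj : nat -> nat -> bool
   (only its values on vertices < n matter). *)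

Definition is_simple_graph (n : nat) (adj : nat -> nat -> bool) : Prop :=
  (forall u v, (u < n)%nat -> (v < n)%nat -> adj u v = adj v u) /\
  (forall u, (u < n)%nat -> adj u u = false).

Definition is_regular (n d : nat) (adj : nat -> nat -> bool) : Prop :=
  forall v, (v < n)%nat -> length (filter (adj v) (seq 0 n)) = d.

Definition triangle_free (n : nat) (adj : nat -> nat -> bool) : Prop :=
  forall u v w, (u < n)%nat -> (v < n)%nat -> (w < n)%nat ->
    ~ (adj u v = true /\ adj v w = true /\ adj u w = true).

Fixpoint sublists (l : list nat) : list (list nat) :=
  match l with
  | [] => [[]]
  | x :: t => let r := sublists t in r ++ map (cons x) r
  end.

Definition independentb (adj : nat -> nat -> bool) (S : list nat) : bool :=
  forallb (fun x => forallb (fun y => negb (adj x y)) S) S.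

Definition indep_sets (n : nat) (adj : nat -> nat -> bool) : list (list nat) :=
  filter (independentb adj) (sublists (seq 0 n)).

Definition indep_poly (n : nat) (adj : nat -> nat -> bool) (lam : R) : R :=
  fold_right Rplus 0 (map (fun S => lam ^ length S) (indep_sets n adj)).

(* K_{d,d} on vertices {0..2d-1}: parts {0..d-1} and {d..2d-1} *)
Definition Kdd_adj (d : nat) (x y : nat) : bool :=
  xorb (Nat.ltb x d) (Nat.ltb y d).

Definition P_Kdd (d : nat) (lam : R) : R := indep_poly (2 * d) (Kdd_adj d) lam.

(* The occupancy method.  Let Z(t) be the independence polynomial of G and
   alpha(t) = t Z'(t) / (n Z(t)) the expected fraction of vertices occupied by a
   random independent set A with P(A) proportional to t^|A|.  Fix a vertex v and
   condition on the part J of A outside N(v): by triangle-freeness, A inside N(v)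
   is then a t-weighted random subset of the y <= d uncovered neighbours of v, those
   with no neighbour in J.  Comparing P(v in A) with the expected number of occupied
   neighbours of v fibre by fibre, and using that (1 - (1+t)^-y) / y decreases in y,
   gives alpha(t) <= t (1+t)^(d-1) / (2(1+t)^d - 1), the occupancy fraction of
   K_{d,d}.  Integrating alpha(t) / t from 0 to lambda yields
   log Z_G(lambda) / n <= log Z_{K_{d,d}}(lambda) / (2d). *)

From Stdlib Require Import Reals List Lra.
From HB Require Import structures.
From mathcomp Require Import all_boot all_order all_algebra Rstruct ring lra.
Import Order.TTheory GRing.Theory Num.Theory.
Set Implicit Arguments. Unset Strict Implicit. Unset Printing Implicit Defensive.

Local Open Scope ring_scope.

Section SumsOverSubsets.
Variable T : finType.

Lemma finset_ind (P : {set T} -> Prop) :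
  P set0 -> (forall (x : T) (U : {set T}), x \notin U -> P U -> P (x |: U)) ->
  forall U, P U.
Proof.
move=> P0 PU1 U; move: {2}#|U| (erefl #|U|) => k; elim: k U => [|k IHk] U cardU.
  by have /eqP -> : U == set0 by rewrite -cards_eq0 -cardU.
have [x xU] : exists x, x \in U by apply/card_gt0P; rewrite cardU.
rewrite -(setD1K xU); apply: PU1; first by rewrite setD11.
by apply: IHk; move: cardU; rewrite (cardsD1 x U) xU => -[].
Qed.

Lemma notin_subset (x : T) (U S : {set T}) : x \notin U -> S \subset U -> x \notin S.
Proof. by move=> xU /subsetP sSU; apply: contra xU; apply: sSU. Qed.

Variable V : nmodType.

Lemma big_subset0 (F : {set T} -> V) : \sum_(S : {set T} | S \subset set0) F S = F set0.
Proof. by rewrite (eq_bigl (pred1 set0)) ?big_pred1_eq // => S; rewrite subset0. Qed.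

Lemma big_subsetU1 (x : T) (U : {set T}) (F : {set T} -> V) : x \notin U ->
  \sum_(S : {set T} | S \subset x |: U) F S =
  \sum_(S : {set T} | S \subset U) F S + \sum_(S : {set T} | S \subset U) F (x |: S).
Proof.
move=> xU; rewrite (bigID (fun S : {set T} => x \in S)) /= addrC; congr (_ + _).
  apply: eq_bigl => S; apply/andP/idP => [[/subsetP sSxU xS] | sSU].
    apply/subsetP => y yS; move: (sSxU y yS); rewrite in_setU1.
    by case: eqP => // yx; rewrite -yx yS in xS.
  by rewrite (subset_trans sSU (subsetUr _ _)) (notin_subset xU sSU).
rewrite (reindex_onto (fun S => x |: S) (fun S => S :\ x)) => [|S /andP[_ xS]]; last first.
  by rewrite setD1K.
apply: eq_bigl => S; apply/andP/idP => [[/andP[/subsetP sSxU _] /eqP eS] | sSU].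
  have xS : x \notin S by rewrite -eS setD11.
  apply/subsetP => y yS; move: (sSxU y); rewrite !in_setU1 yS orbT => /(_ isT).
  by case: eqP => // yx; rewrite -yx yS in xS.
by rewrite setU1K ?(notin_subset xU sSU) // eqxx setU11 setUS.
Qed.

Lemma big_subsetU (P Q : {set T}) (F : {set T} -> V) : [disjoint P & Q] ->
  \sum_(A : {set T} | A \subset P :|: Q) F A =
  \sum_(J : {set T} | J \subset P) \sum_(S : {set T} | S \subset Q) F (J :|: S).
Proof.
elim/finset_ind: P F => [|x P xP IHP] F dPQ.
  by rewrite big_subset0 set0U; apply: eq_bigr => S _; rewrite set0U.
have xQ : x \notin Q by rewrite (disjointFr dPQ) // setU11.
have dPQ' : [disjoint P & Q] by apply: disjointWl dPQ; apply: subsetUr.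
rewrite -setUA big_subsetU1 ?in_setU ?negb_or ?xP ?xQ // big_subsetU1 //.
rewrite (IHP F dPQ') (IHP (fun S => F (x |: S)) dPQ').
by congr (_ + _); apply: eq_bigr => J _; apply: eq_bigr => S _; rewrite setUA.
Qed.

End SumsOverSubsets.

Section BinomialSums.
Variables (T : finType) (K : comPzRingType).

Lemma sum_subsets_exp (U : {set T}) (t : K) :
  \sum_(S : {set T} | S \subset U) t ^+ #|S| = (1 + t) ^+ #|U|.
Proof.
elim/finset_ind: U => [|x U xU IHU]; first by rewrite big_subset0 cards0 !expr0.
rewrite big_subsetU1 // IHU cardsU1 xU exprS.
rewrite (eq_bigr (fun S : {set T} => t * t ^+ #|S|)) => [|S sSU]; last first.
  by rewrite cardsU1 (notin_subset xU sSU) exprS.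
by rewrite -big_distrr /= IHU mulrDl mul1r.
Qed.

Lemma sum_subsets_card_exp (U : {set T}) (t : K) :
  (1 + t) * \sum_(S : {set T} | S \subset U) #|S|%:R * t ^+ #|S|
  = #|U|%:R * t * (1 + t) ^+ #|U|.
Proof.
elim/finset_ind: U => [|x U xU IHU]; first by rewrite big_subset0 cards0 !mul0r mulr0.
rewrite big_subsetU1 //.
rewrite [X in _ * (_ + X)](eq_bigr (fun S : {set T} => t * (#|S|%:R * t ^+ #|S|) + t * t ^+ #|S|))
  => [|S sSU]; last by rewrite cardsU1 (notin_subset xU sSU) add1n exprS -addn1 natrD; ring.
rewrite big_split /= -!big_distrr /= sum_subsets_exp cardsU1 xU add1n exprS -addn1 natrD.
rewrite !mulrDr IHU mulrCA IHU; ring.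
Qed.

Lemma expr_cardsID (B A : {set T}) (t : K) :
  t ^+ #|A| = t ^+ #|A :\: B| * t ^+ #|A :&: B|.
Proof. by rewrite -exprD addnC cardsID. Qed.

End BinomialSums.

Section ExpInequalities.
Variable F : realFieldType.

Lemma bernoulli_ineq (q : F) (k : nat) : 1 <= q -> 1 + k%:R * (q - 1) <= q ^+ k.
Proof.
move=> q_ge1; elim: k => [|k IHk]; first by rewrite mul0r addr0 expr0.
have k_ge0 : 0 <= k%:R :> F by apply: ler0n.
have : 0 <= k%:R * (q - 1) * (q - 1) by rewrite !mulr_ge0 // subr_ge0.
by rewrite exprS -addn1 natrD; nra.
Qed.

Lemma expn_sub1_ratio_step (q : F) (k : nat) : 1 <= q ->
  k%:R * (q ^+ k.+1 - 1) <= (k%:R + 1) * q * (q ^+ k - 1).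
Proof. by move=> q_ge1; have := bernoulli_ineq k.+1 q_ge1; rewrite !exprS -addn1 natrD; nra. Qed.

(* [(1 - q ^- k) / k] is nonincreasing in [k]. *)
Lemma expn_sub1_ratio_le (q : F) (j k : nat) : 1 <= q -> (j <= k)%N ->
  j%:R * (q ^+ k - 1) * q ^+ j <= k%:R * q ^+ k * (q ^+ j - 1).
Proof.
move=> q_ge1; case: j => [|j] le_jk; first by rewrite !mul0r expr0 subrr mulr0.
have b_ge1 : 1 <= q ^+ j.+1 by rewrite exprn_ege1.
rewrite -(subnKC le_jk); elim: (k - j.+1)%N => [|i IHi]; first by rewrite addn0 mulrAC.
set m := (j.+1 + i)%N in IHi *; set a := q ^+ m in IHi *; set b := q ^+ j.+1 in IHi b_ge1 *.
have m_ge1 : 1 <= m%:R :> F by rewrite ler1n /m addSn.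
have a_ge1 : 1 <= a by rewrite exprn_ege1.
have step := expn_sub1_ratio_step m q_ge1; rewrite -/a exprS -/a in step.
rewrite addnS exprS -/m -/a.
have -> : m.+1%:R = m%:R + 1 :> F by rewrite -addn1 natrD.
set y := j.+1%:R in IHi *.
have y_ge0 : 0 <= y by apply: ler0n.
rewrite -(ler_pM2l (lt_le_trans ltr01 m_ge1)).
have le1 : m%:R * (y * (q * a - 1) * b) <= (m%:R + 1) * q * (y * (a - 1) * b).
  have yb_ge0 : 0 <= y * b by rewrite mulr_ge0 // (le_trans ler01 b_ge1).
  by have := mulr_ge0 yb_ge0 (etrans (subr_ge0 _ _) step); nra.
have le2 : (m%:R + 1) * q * (y * (a - 1) * b) <= (m%:R + 1) * q * (m%:R * a * (b - 1)).
  by rewrite ler_pM2l //; nra.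
lra.
Qed.

End ExpInequalities.

Section IndependentSets.
Variables (n : nat) (adj : nat -> nat -> bool).
Hypothesis adj_sym : forall u v : 'I_n, adj u v = adj v u.
Hypothesis adj_irr : forall u : 'I_n, adj u u = false.

Definition independent (A : {set 'I_n}) : bool :=
  [forall x in A, forall y in A, ~~ adj x y].

Definition nbhd (v : 'I_n) : {set 'I_n} := [set u : 'I_n | adj v u].

Definition uncovered_nbhd (v : 'I_n) (J : {set 'I_n}) : {set 'I_n} :=
  [set u in nbhd v | [forall y in J, ~~ adj u y]].

Lemma independentP (A : {set 'I_n}) :
  reflect (forall x y, x \in A -> y \in A -> adj x y = false) (independent A).
Proof.
apply: (iffP forall_inP) => [indA x y xA yA | indA x xA].
  by move/forall_inP: (indA x xA) => /(_ y yA) /negbTE.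
by apply/forall_inP => y yA; rewrite indA.
Qed.

Lemma independent_set0 : independent set0.
Proof. by apply/independentP => x y; rewrite inE. Qed.

Lemma independentS (A B : {set 'I_n}) : A \subset B -> independent B -> independent A.
Proof.
by move=> /subsetP sAB /independentP indB; apply/independentP => x y /sAB xB /sAB; apply: indB.
Qed.

Lemma independentU1 (v : 'I_n) (B : {set 'I_n}) :
  independent (v |: B) = independent B && [disjoint B & nbhd v].
Proof.
apply/idP/andP => [indvB | [/independentP indB dBv]].
  split; first by apply: independentS indvB; apply: subsetUr.
  rewrite -setI_eq0; apply/eqP/setP => x; rewrite !inE; apply/andP => -[xB vx].
  by move/independentP: indvB => /(_ v x); rewrite !inE eqxx xB orbT vx => /(_ isT isT).
have vN x : x \in B -> adj v x = false by move=> xB; have := disjointFr dBv xB; rewrite inE.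
apply/independentP => x y; rewrite !in_setU1.
case: eqP => [-> _ | _ /= xB]; case: eqP => [-> | _ /= yB] //; first exact: vN.
  by rewrite adj_sym vN.
exact: indB.
Qed.

Hypothesis adj_triangle_free : forall u v w : 'I_n, adj u v -> adj v w -> adj u w -> False.

Lemma uncovered_nbhd_sub (v : 'I_n) (J : {set 'I_n}) : uncovered_nbhd v J \subset nbhd v.
Proof. by apply/subsetP => x; rewrite inE => /andP[]. Qed.

(* Triangle-freeness enters here: [nbhd v] is independent, so [S] only has to avoid [J]. *)
Lemma independentU_nbhd (v : 'I_n) (J S : {set 'I_n}) : S \subset nbhd v ->
  independent (J :|: S) = independent J && (S \subset uncovered_nbhd v J).
Proof.
move=> /subsetP sSN; apply/idP/andP => [indJS | [/independentP indJ /subsetP sSF]].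
  split; first by apply: independentS indJS; apply: subsetUl.
  apply/subsetP => u uS; rewrite inE sSN //=; apply/forall_inP => y yJ.
  by move/independentP: indJS => /(_ u y); rewrite !inE uS yJ orbT => /(_ isT isT) ->.
have freeJ u y : u \in S -> y \in J -> adj u y = false.
  by move=> /sSF; rewrite inE => /andP[_ /forall_inP/(_ y)] freeu /freeu/negbTE.
apply/independentP => x y; rewrite !inE.
case/orP=> [xJ | xS]; case/orP=> [yJ | yS].
- exact: indJ.
- by rewrite adj_sym freeJ.
- exact: freeJ.
- have := sSN x xS; have := sSN y yS; rewrite !inE => vy vx.
  by apply/negbTE/negP => xy; apply: (adj_triangle_free vx xy vy).
Qed.

Lemma big_independent_fiber (V : nmodType) (v : 'I_n)
    (F : {set 'I_n} -> {set 'I_n} -> V) :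
  \sum_(A : {set 'I_n} | independent A) F (A :\: nbhd v) (A :&: nbhd v) =
  \sum_(J : {set 'I_n} | (J \subset ~: nbhd v) && independent J)
     \sum_(S : {set 'I_n} | S \subset uncovered_nbhd v J) F J S.
Proof.
rewrite big_mkcond (eq_bigl (fun A : {set 'I_n} => A \subset ~: nbhd v :|: nbhd v)) => [|A].
  2: by rewrite setUC setUCr subsetT.
rewrite big_subsetU ?disjoints_subset // big_mkcondr /=; apply: eq_bigr => J sJN.
have dJN : [disjoint J & nbhd v] by rewrite disjoints_subset.
rewrite (eq_bigr (fun S : {set 'I_n} =>
    if independent J && (S \subset uncovered_nbhd v J) then F J S else 0)) => [|S sSN]; last first.
  have /eqP SDN : S :\: nbhd v == set0 by rewrite setD_eq0.
  rewrite setDUl (setDidPl dJN) SDN setU0 setIUl (disjoint_setI0 dJN) (setIidPl sSN) set0U.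
  by rewrite (independentU_nbhd J sSN).
case: (independent J) => /=; last by rewrite big1.
rewrite -big_mkcondr; apply: eq_bigl => S; apply/andP/idP => [[] // | sSF].
by rewrite sSF (subset_trans sSF (uncovered_nbhd_sub v J)).
Qed.

Section Weights.
Context {K : realFieldType}.

Definition indep_sum (t : K) : K := \sum_(A : {set 'I_n} | independent A) t ^+ #|A|.

Definition indep_sum_deriv (t : K) : K :=
  \sum_(A : {set 'I_n} | independent A) #|A|%:R * t ^+ #|A|.-1.

Definition indep_sum_mem (v : 'I_n) (t : K) : K :=
  \sum_(A : {set 'I_n} | independent A && (v \in A)) t ^+ #|A|.

Definition indep_sum_avoid (v : 'I_n) (t : K) : K :=
  \sum_(A : {set 'I_n} | independent A && [disjoint A & nbhd v]) t ^+ #|A|.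

Lemma indep_sum0 : indep_sum 0 = 1.
Proof.
rewrite /indep_sum (bigD1 set0) ?independent_set0 // cards0 expr0.
rewrite big1 => [|A /andP[_ A0]]; first exact: addr0.
by rewrite expr0n cards_eq0 (negbTE A0).
Qed.

Lemma indep_sum_ge1 (t : K) : 0 <= t -> 1 <= indep_sum t.
Proof.
move=> t_ge0; rewrite /indep_sum (bigD1 set0) ?independent_set0 // cards0 expr0 lerDl.
by apply: sumr_ge0 => A _; apply: exprn_ge0.
Qed.

(* Adding [v] is a bijection from the independent sets avoiding [v] and its
   neighbourhood onto those containing [v]. *)
Lemma indep_sum_mem_avoid (v : 'I_n) (t : K) :
  (1 + t) * indep_sum_mem v t = t * indep_sum_avoid v t.
Proof.
set W := \sum_(A : {set 'I_n} | (independent A && [disjoint A & nbhd v]) && (v \notin A))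
           t ^+ #|A|.
have avoidE : indep_sum_avoid v t = indep_sum_mem v t + W.
  rewrite /indep_sum_avoid (bigID (fun A : {set 'I_n} => v \in A)) /=; congr (_ + _).
  apply: eq_bigl => A; apply/andP/andP => [[/andP[-> _] ->] // | [indA vA]].
  split=> //; rewrite indA -setI_eq0; apply/eqP/setP => u; rewrite !inE.
  by apply/andP => -[uA vu]; move/independentP: indA => /(_ v u vA uA); rewrite vu.
have memE : indep_sum_mem v t = t * W.
  rewrite /indep_sum_mem (reindex_onto (fun B => v |: B) (fun A => A :\ v)); last first.
    by move=> A /andP[_ vA]; rewrite setD1K.
  rewrite /W big_distrr /=; apply: eq_big => B.
    rewrite independentU1 setU11 andbT; apply/andP/andP => [[-> /eqP eB] | [-> vB]].
      by rewrite -eB setD11.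
    by rewrite setU1K.
  case/andP=> _ /eqP eB; have vB : v \notin B by rewrite -eB setD11.
  by rewrite cardsU1 vB add1n exprS.
by rewrite avoidE memE; ring.
Qed.

Lemma sum_indep_sum_mem (N : {set 'I_n}) (t : K) :
  \sum_(u in N) indep_sum_mem u t
  = \sum_(A : {set 'I_n} | independent A) #|A :&: N|%:R * t ^+ #|A|.
Proof.
rewrite /indep_sum_mem; under eq_bigr do rewrite big_mkcondr.
rewrite exchange_big /=; apply: eq_bigr => A _; rewrite -big_mkcondr /=.
rewrite (eq_bigl (fun u => u \in A :&: N)) => [|u]; last by rewrite !inE andbC.
by rewrite sumr_const mulr_natl.
Qed.

Lemma sum_indep_sum_memT (t : K) :
  \sum_(u : 'I_n) indep_sum_mem u t = t * indep_sum_deriv t.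
Proof.
have := sum_indep_sum_mem setT t.
rewrite (eq_bigl xpredT) => [->|u]; last exact: in_setT.
rewrite /indep_sum_deriv big_distrr /=; apply: eq_bigr => A _.
rewrite setIT; case: #|A| => [|k]; first by rewrite !mul0r mulr0.
by rewrite exprS /=; ring.
Qed.

Lemma indep_sum_fiber (v : 'I_n) (t : K) : indep_sum t =
  \sum_(J : {set 'I_n} | (J \subset ~: nbhd v) && independent J)
     t ^+ #|J| * (1 + t) ^+ #|uncovered_nbhd v J|.
Proof.
rewrite /indep_sum (eq_bigr (fun A : {set 'I_n} =>
    t ^+ #|A :\: nbhd v| * t ^+ #|A :&: nbhd v|)) => [|A _].
  rewrite (big_independent_fiber v (fun J S => t ^+ #|J| * t ^+ #|S|)).
  by apply: eq_bigr => J _; rewrite -big_distrr /= sum_subsets_exp.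
exact: expr_cardsID.
Qed.

Lemma indep_sum_avoid_fiber (v : 'I_n) (t : K) : indep_sum_avoid v t =
  \sum_(J : {set 'I_n} | (J \subset ~: nbhd v) && independent J) t ^+ #|J|.
Proof.
rewrite /indep_sum_avoid big_mkcondr /=.
rewrite (eq_bigr (fun A : {set 'I_n} => if A :&: nbhd v == set0
    then t ^+ #|A :\: nbhd v| * t ^+ #|A :&: nbhd v| else 0)) => [|A _]; last first.
  by rewrite setI_eq0 -expr_cardsID.
rewrite (big_independent_fiber v (fun J S => if S == set0 then t ^+ #|J| * t ^+ #|S| else 0)).
apply: eq_bigr => J _; rewrite -big_mkcondr /= (eq_bigl (pred1 set0)) => [|S].
  by rewrite big_pred1_eq cards0 expr0 mulr1.
by apply/andP/idP => [[] // | /eqP ->]; rewrite sub0set.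
Qed.

Lemma sum_nbhd_indep_sum_mem_fiber (v : 'I_n) (t : K) :
  \sum_(u in nbhd v) indep_sum_mem u t =
  \sum_(J : {set 'I_n} | (J \subset ~: nbhd v) && independent J)
     t ^+ #|J| * \sum_(S : {set 'I_n} | S \subset uncovered_nbhd v J) #|S|%:R * t ^+ #|S|.
Proof.
rewrite sum_indep_sum_mem (eq_bigr (fun A : {set 'I_n} =>
    #|A :&: nbhd v|%:R * (t ^+ #|A :\: nbhd v| * t ^+ #|A :&: nbhd v|))) => [|A _].
  rewrite (big_independent_fiber v (fun J S => #|S|%:R * (t ^+ #|J| * t ^+ #|S|))).
  by apply: eq_bigr => J _; rewrite big_distrr /=; apply: eq_bigr => S _; ring.
by rewrite -expr_cardsID.
Qed.

Variable d : nat.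
Hypothesis card_nbhd : forall v : 'I_n, #|nbhd v| = d.

(* Fibre by fibre over [J], with [y := #|uncovered_nbhd v J| <= d], this is
   [expn_sub1_ratio_le]; it is an equality when [y = d], as in K_{d,d}. *)
Lemma local_occupancy_ineq (v : 'I_n) (t : K) : 0 < t ->
  t * d%:R * (1 + t) ^+ d * indep_sum_avoid v t
    + ((1 + t) ^+ d - 1) * (1 + t) * \sum_(u in nbhd v) indep_sum_mem u t
  <= t * d%:R * (1 + t) ^+ d * indep_sum t.
Proof.
move=> t_gt0; rewrite indep_sum_avoid_fiber sum_nbhd_indep_sum_mem_fiber (indep_sum_fiber v).
rewrite !big_distrr -big_split /=; apply: ler_sum => J _.
have le_yd : (#|uncovered_nbhd v J| <= d)%N.
  by rewrite -(card_nbhd v) subset_leq_card // uncovered_nbhd_sub.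
have q_ge1 : 1 <= 1 + t by lra.
have ratio := expn_sub1_ratio_le q_ge1 le_yd.
have sumF := sum_subsets_card_exp (uncovered_nbhd v J) t.
move: ratio sumF; set y := #|uncovered_nbhd v J|%:R; set a := (1 + t) ^+ d.
set b := (1 + t) ^+ #|uncovered_nbhd v J|; set T := \sum_(S | _) _; set w := t ^+ #|J|.
move=> ratio sumF; have wt_ge0 : 0 <= w * t by rewrite mulr_ge0 ?exprn_ge0 // ltW.
have -> : t * d%:R * a * w + (a - 1) * (1 + t) * (w * T)
          = w * t * (d%:R * a) + w * t * (y * (a - 1) * b).
  have -> : (a - 1) * (1 + t) * (w * T) = w * (a - 1) * ((1 + t) * T) by ring.
  by rewrite sumF; ring.
rewrite -mulrDr (_ : t * d%:R * a * (w * b) = w * t * (d%:R * a * b)); last by ring.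
by rewrite ler_wpM2l //; lra.
Qed.

Lemma sum_nbhd_indep_sum_mem (t : K) :
  \sum_(v : 'I_n) \sum_(u in nbhd v) indep_sum_mem u t
  = d%:R * \sum_(u : 'I_n) indep_sum_mem u t.
Proof.
under eq_bigr do rewrite big_mkcond /=.
rewrite exchange_big /= big_distrr /=; apply: eq_bigr => u _; rewrite -big_mkcond /=.
rewrite (eq_bigl (mem (nbhd u))) => [|v]; last by rewrite !inE adj_sym.
by rewrite sumr_const card_nbhd mulr_natl.
Qed.

(* Sum [local_occupancy_ineq] over [v]; double counting and [indep_sum_mem_avoid]
   express its left-hand side through [indep_sum_deriv]. *)
Lemma occupancy_ineq (t : K) : 0 < t -> (0 < d)%N ->
  indep_sum_deriv t * (2 * (1 + t) ^+ d - 1) <= n%:R * (1 + t) ^+ d.-1 * indep_sum t.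
Proof.
move=> t_gt0 d_gt0.
have summed : \sum_(v : 'I_n) (t * d%:R * (1 + t) ^+ d * indep_sum_avoid v t
      + ((1 + t) ^+ d - 1) * (1 + t) * \sum_(u in nbhd v) indep_sum_mem u t)
    <= \sum_(v : 'I_n) t * d%:R * (1 + t) ^+ d * indep_sum t.
  by apply: ler_sum => v _; apply: local_occupancy_ineq.
have avoidE : t * \sum_(v : 'I_n) indep_sum_avoid v t = (1 + t) * (t * indep_sum_deriv t).
  rewrite -sum_indep_sum_memT !big_distrr /=.
  by apply: eq_bigr => v _; rewrite indep_sum_mem_avoid.
rewrite big_split /= -!big_distrr /= sum_nbhd_indep_sum_mem sumr_const card_ord in summed.
rewrite -[indep_sum t *+ n]mulr_natl sum_indep_sum_memT in summed.
rewrite [t * _ * _ * _](_ : _ = d%:R * (1 + t) ^+ d * ((1 + t) * (t * indep_sum_deriv t)))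
  in summed; last by rewrite -avoidE; ring.
have powE : (1 + t) ^+ d = (1 + t) * (1 + t) ^+ d.-1 by rewrite -exprS prednK.
rewrite powE in summed *.
rewrite -(@ler_pM2l _ (d%:R * (1 + t) * t)); last by rewrite !mulr_gt0 ?ltr0n //; lra.
lra.
Qed.

End Weights.
End IndependentSets.

Section ListConversions.

Lemma ltbE (x y : nat) : Nat.ltb x y = (x < y)%N.
Proof. by apply/idP/idP => [/Nat.ltb_lt/ssrnat.ltP | /ssrnat.ltP/Nat.ltb_lt]. Qed.

Lemma lengthE (T : Type) (s : list T) : length s = size s.
Proof. by elim: s => //= x s ->. Qed.

Lemma appE (T : Type) (s1 s2 : list T) : List.app s1 s2 = s1 ++ s2.
Proof. by elim: s1 => //= x s1 ->. Qed.

Lemma mapE (T1 T2 : Type) (f : T1 -> T2) (s : list T1) : List.map f s = map f s.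
Proof. by elim: s => //= x s ->. Qed.

Lemma forallbE (T : Type) (f : T -> bool) (s : list T) : List.forallb f s = all f s.
Proof. by elim: s => //= x s ->. Qed.

Lemma filterE (T : Type) (f : T -> bool) (s : list T) : List.filter f s = filter f s.
Proof. by elim: s => //= x s ->. Qed.

Lemma seqE (m k : nat) : List.seq m k = iota m k.
Proof. by elim: k m => //= k IHk m; rewrite IHk. Qed.

Lemma fold_right_RplusE (T : Type) (g : T -> R) (s : list T) :
  fold_right Rplus 0%R (List.map g s) = \sum_(x <- s) g x.
Proof. by elim: s => [|x s IHs]; rewrite ?big_nil // big_cons /= IHs. Qed.

End ListConversions.

Section CompleteBipartite.
Variables (d : nat) (K : realFieldType).

Definition left_part : {set 'I_(2 * d)} := [set i : 'I_(2 * d) | (i < d)%N].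

Lemma card_left_part : #|left_part| = d.
Proof.
have le_d2d : (d <= 2 * d)%N by rewrite leq_pmull.
have -> : left_part = [set widen_ord le_d2d i | i : 'I_d].
  apply/setP => x; rewrite !inE; apply/idP/imsetP => [x_lt_d | [i _ ->]].
    by exists (Ordinal x_lt_d) => //; apply: val_inj.
  by rewrite /= ltn_ord.
rewrite card_imset ?card_ord //.
by move=> i j /(congr1 val) /= /val_inj.
Qed.

Lemma card_right_part : #|~: left_part| = d.
Proof. by rewrite cardsCs setCK card_left_part card_ord mul2n -addnn addnK. Qed.

Lemma independent_Kdd (A : {set 'I_(2 * d)}) :
  independent (Kdd_adj d) A = (A \subset left_part) || (A \subset ~: left_part).
Proof.
apply/idP/idP => [/independentP indA | /orP[] /subsetP sA].
- have [//|/subsetPn[x xA xL]] := boolP (A \subset left_part).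
  apply/subsetP => y yA; have := indA x y xA yA; rewrite /Kdd_adj !ltbE.
  by move: xL; rewrite !inE => /negbTE ->; case: (y < d)%N.
- apply/independentP => x y xA yA; have := sA x xA; have := sA y yA.
  by rewrite !inE /Kdd_adj !ltbE => -> ->.
- apply/independentP => x y xA yA; have := sA x xA; have := sA y yA.
  by rewrite !inE /Kdd_adj !ltbE => /negbTE -> /negbTE ->.
Qed.

Lemma indep_sum_Kdd (t : K) : indep_sum (2 * d) (Kdd_adj d) t = 2 * (1 + t) ^+ d - 1.
Proof.
have subLR (A : {set 'I_(2 * d)}) : A \subset left_part -> A \subset ~: left_part -> A = set0.
  move=> /subsetP sAL /subsetP sAR; apply/setP => x; rewrite inE.
  by apply/negbTE/negP => xA; move: (sAL x xA) (sAR x xA); rewrite !inE => ->.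
rewrite /indep_sum (eq_bigl _ _ independent_Kdd).
rewrite (bigID (fun A : {set 'I_(2 * d)} => A \subset left_part)) /=.
rewrite (eq_bigl (fun A : {set 'I_(2 * d)} => A \subset left_part)) => [|A]; last first.
  by case: (A \subset left_part); rewrite ?andbF.
rewrite sum_subsets_exp card_left_part.
have := sum_subsets_exp (~: left_part) t.
rewrite card_right_part (bigID (fun A : {set 'I_(2 * d)} => A \subset left_part)) /=.
rewrite (eq_bigl (pred1 set0)) => [|A]; last first.
  by apply/andP/eqP => [[/subLR] | ->]; rewrite ?sub0set.
rewrite big_pred1_eq cards0 expr0.
rewrite [X in _ + X = _](eq_bigl (fun A : {set 'I_(2 * d)} =>
  ((A \subset left_part) || (A \subset ~: left_part)) && ~~ (A \subset left_part))) => [|A].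
  by lra.
by case: (A \subset left_part); rewrite ?andbF.
Qed.

End CompleteBipartite.

Section ListEncoding.
Variable n : nat.

Definition set_of_seq (S : seq nat) : {set 'I_n} := [set i : 'I_n | val i \in S].

Lemma set_of_seq_nil : set_of_seq [::] = set0.
Proof. by apply/setP => i; rewrite !inE. Qed.

Lemma set_of_seq_cons (x : nat) (x_lt_n : (x < n)%N) (S : seq nat) :
  set_of_seq (x :: S) = Ordinal x_lt_n |: set_of_seq S.
Proof. by apply/setP => i; rewrite !inE -val_eqE. Qed.

Lemma card_set_of_seq (S : seq nat) :
  uniq S -> all (fun x => x < n)%N S -> #|set_of_seq S| = size S.
Proof.
elim: S => [|x S IHS]; first by rewrite set_of_seq_nil cards0.
move=> /= /andP[xS uS] /andP[x_lt_n aS].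
by rewrite (set_of_seq_cons x_lt_n) cardsU1 inE xS IHS.
Qed.

Lemma sublists_subseq (l S : seq nat) : S \in sublists l -> subseq S l.
Proof.
elim: l S => [|x l IHl] S; first by rewrite /= inE => /eqP ->.
rewrite [sublists _]/= appE mapE mem_cat => /orP[/IHl sSl | /mapP[S' /IHl sS'l ->]].
  exact: subseq_trans sSl (subseq_cons l x).
by rewrite /= eqxx.
Qed.

Lemma big_sublists (V : nmodType) (l : seq nat) (F : {set 'I_n} -> V) :
  uniq l -> all (fun x => x < n)%N l ->
  \sum_(S <- sublists l) F (set_of_seq S)
  = \sum_(A : {set 'I_n} | A \subset set_of_seq l) F A.
Proof.
elim: l F => [|x l IHl] F; first by rewrite /= big_seq1 set_of_seq_nil big_subset0.
move=> /= /andP[xl ul] /andP[x_lt_n al].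
rewrite appE mapE big_cat big_map /= (set_of_seq_cons x_lt_n) big_subsetU1 ?inE //.
rewrite (IHl F ul al); under eq_bigr do rewrite (set_of_seq_cons x_lt_n).
by rewrite (IHl (fun A => F (Ordinal x_lt_n |: A)) ul al).
Qed.

Lemma independentb_set_of_seq (adj : nat -> nat -> bool) (S : seq nat) :
  all (fun x => x < n)%N S -> independentb adj S = independent adj (set_of_seq S).
Proof.
move=> /allP aS; rewrite /independentb forallbE; apply/allP/independentP => [indS x y | indS x xS].
  by rewrite !inE => xS yS; have := indS _ xS; rewrite forallbE => /allP/(_ _ yS)/negbTE.
rewrite forallbE; apply/allP => y yS.
by have := indS (Ordinal (aS x xS)) (Ordinal (aS y yS)); rewrite !inE => /(_ xS yS) ->.
Qed.

Lemma indep_polyE (adj : nat -> nat -> bool) (t : R) : indep_poly n adj t = indep_sum n adj t.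
Proof.
rewrite /indep_poly /indep_sets fold_right_RplusE filterE big_filter seqE big_mkcond /=.
have iota_lt_n : all (fun x => x < n)%N (iota 0 n) by apply/allP => x; rewrite mem_iota.
rewrite (eq_big_seq (fun S => (fun A => if independent adj A then t ^+ #|A| else 0)
                                (set_of_seq S))) => [|S /sublists_subseq sSn]; last first.
  have uS : uniq S := subseq_uniq sSn (iota_uniq 0 n).
  have aS : all (fun x => x < n)%N S by apply/allP => x /(mem_subseq sSn); rewrite mem_iota.
  by rewrite /= (independentb_set_of_seq adj aS) (card_set_of_seq uS aS) RpowE.
rewrite (big_sublists (fun A => if independent adj A then t ^+ #|A| else 0)) ?iota_uniq //.
rewrite /indep_sum [RHS]big_mkcond /=.
by apply: eq_bigl => A; apply/subsetP => x _; rewrite !inE mem_iota /=.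
Qed.

End ListEncoding.

Local Open Scope R_scope.

Lemma ln_ge0 (x : R) : 1 <= x -> 0 <= ln x.
Proof.
move=> x_ge1; have [x_gt1 | <-] := Rle_lt_or_eq_dec _ _ x_ge1; last by rewrite ln_1; Lra.lra.
by have := ln_increasing 1 x Rlt_0_1 x_gt1; rewrite ln_1; Lra.lra.
Qed.

Lemma exp_le_exp (x y : R) : x <= y -> exp x <= exp y.
Proof. by case/Rle_lt_or_eq_dec => [/exp_increasing | ->]; Lra.lra. Qed.

(* [m = 0] is allowed: then [/ m = 0]. *)
Lemma Rinv_mul_le_of_mul_le (a b c m : R) : 0 <= b -> 0 < c -> 0 <= m ->
  c * a <= m * b -> / m * a <= / c * b.
Proof.
move=> b_ge0 c_gt0 m_ge0 le_ab.
have [m_gt0 | <-] := Rle_lt_or_eq_dec _ _ m_ge0; last first.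
  by rewrite Rinv_0 Rmult_0_l; apply/Rmult_le_pos/b_ge0/Rlt_le/Rinv_0_lt_compat.
apply: (Rmult_le_reg_l m) => //; rewrite -Rmult_assoc Rinv_r ?Rmult_1_l; last by Lra.lra.
apply: (Rmult_le_reg_l c) => //.
have -> : c * (m * (/ c * b)) = m * b.
  by rewrite ?RmultE ?RinvE; field; rewrite lt0r_neq0 //; apply/RltP.
exact: le_ab.
Qed.

Lemma le_Rdiv_mul_of_mul_le (a b c m : R) : 0 < c -> c * a <= m * b -> a <= m / c * b.
Proof.
move=> c_gt0 le_ab; apply: (Rmult_le_reg_l c) => //.
have -> : c * (m / c * b) = m * b.
  by rewrite /Rdiv ?RmultE ?RinvE; field; rewrite lt0r_neq0 //; apply/RltP.
exact: le_ab.
Qed.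

(* The hypothesis is [a f'/f <= b g'/g], cross-multiplied; integrate it with the
   mean value theorem. *)
Lemma ln_le_of_log_deriv_le (f g df dg : R -> R) (a b lam : R) : 0 < lam ->
  (forall t, 0 <= t <= lam -> derivable_pt_lim f t (df t)) ->
  (forall t, 0 <= t <= lam -> derivable_pt_lim g t (dg t)) ->
  (forall t, 0 <= t <= lam -> 0 < f t /\ 0 < g t) -> f 0 = 1 -> g 0 = 1 ->
  (forall t, 0 < t < lam -> a * df t * g t <= b * dg t * f t) ->
  a * ln (f lam) <= b * ln (g lam).
Proof.
move=> lam_gt0 df_f dg_g fg_gt0 f0 g0 dfg_le.
pose h x := b * ln (g x) - a * ln (f x).
pose dh x := b * (/ g x * dg x) - a * (/ f x * df x).
have h_deriv c : 0 <= c <= lam -> derivable_pt_lim h c (dh c).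
  move=> c_in; have [fc_gt0 gc_gt0] := fg_gt0 c c_in.
  apply: derivable_pt_lim_minus; apply: derivable_pt_lim_scal.
    exact: derivable_pt_lim_comp (dg_g c c_in) (derivable_pt_lim_ln _ gc_gt0).
  exact: derivable_pt_lim_comp (df_f c c_in) (derivable_pt_lim_ln _ fc_gt0).
have [c [hE c_in]] := MVT_cor2 h dh 0 lam lam_gt0 h_deriv.
have [fc_gt0 gc_gt0] : 0 < f c /\ 0 < g c by apply: fg_gt0; Lra.lra.
have dhE : dh c = (b * dg c * f c - a * df c * g c) / (f c * g c).
  rewrite /dh /Rdiv ?RplusE ?RminusE ?RmultE ?RinvE ?RoppE; field.
  by rewrite !lt0r_neq0 //; apply/RltP.
have dh_ge0 : 0 <= dh c.
  rewrite dhE; apply: Rmult_le_pos; first by have := dfg_le c c_in; Lra.lra.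
  by apply/Rlt_le/Rinv_0_lt_compat/Rmult_lt_0_compat.
have : 0 <= h lam - h 0 by rewrite hE; apply: Rmult_le_pos => //; Lra.lra.
by rewrite /h f0 g0 ln_1; Lra.lra.
Qed.

Lemma derivable_pt_lim_big (I : Type) (r : seq I) (P : pred I) (f df : I -> R -> R) (x : R) :
  (forall i, derivable_pt_lim (f i) x (df i x)) ->
  derivable_pt_lim (fun y => \sum_(i <- r | P i) f i y)%R x (\sum_(i <- r | P i) df i x)%R.
Proof.
move=> f_df; elim: r => [|i r IHr].
  rewrite big_nil; apply: (derivable_pt_lim_ext (fct_cte 0%R)) => [y|]; first by rewrite big_nil.
  exact: derivable_pt_lim_const.
rewrite big_cons; case Pi: (P i) => /=.
  apply: derivable_pt_lim_ext (derivable_pt_lim_plus _ _ _ _ _ (f_df i) IHr) => y.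
  by rewrite big_cons Pi.
by apply: derivable_pt_lim_ext IHr => y; rewrite big_cons Pi.
Qed.

Lemma derivable_pt_lim_indep_sum (n : nat) (adj : nat -> nat -> bool) (t : R) :
  derivable_pt_lim (indep_sum n adj) t (indep_sum_deriv n adj t).
Proof.
rewrite /indep_sum_deriv.
refine (@derivable_pt_lim_big _ (index_enum _) (fun A => independent adj A)
  (fun A y => y ^+ #|A|)%R (fun A y => #|A|%:R * y ^+ #|A|.-1)%R t _) => A.
rewrite -INRE -RpowE; apply: (derivable_pt_lim_ext (pow^~ #|A|)) => [y|]; first exact: RpowE.
exact: derivable_pt_lim_pow.
Qed.

Lemma derivable_pt_lim_Kdd_poly (d : nat) (t : R) :
  derivable_pt_lim (fun x => 2 * (1 + x) ^ d - 1) t (2 * (INR d * (1 + t) ^ Nat.pred d)).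
Proof.
have shift : derivable_pt_lim (fun x => 1 + x) t 1.
  have := derivable_pt_lim_plus _ _ t _ _ (derivable_pt_lim_const 1 t) (derivable_pt_lim_id t).
  by rewrite Rplus_0_l.
have pow := derivable_pt_lim_comp _ _ t _ _ shift (derivable_pt_lim_pow (1 + t) d).
rewrite Rmult_1_r in pow.
have := derivable_pt_lim_minus _ _ t _ _ (derivable_pt_lim_scal _ 2 t _ pow)
  (derivable_pt_lim_const 1 t).
by rewrite Rminus_0_r.
Qed.
Lemma ln_indep_sum_le (n d : nat) (adj : nat -> nat -> bool) (lam : R) :
  (forall u v : 'I_n, adj u v = adj v u) -> (forall u : 'I_n, adj u u = false) ->
  (forall u v w : 'I_n, adj u v -> adj v w -> adj u w -> False) ->
  (forall v : 'I_n, #|nbhd adj v| = d) -> (0 < d)%N -> 0 < lam ->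
  2 * INR d * ln (indep_sum n adj lam) <= INR n * ln (2 * (1 + lam) ^ d - 1).
Proof.
move=> adj_sym adj_irr adj_tri card_nbhd d_gt0 lam_gt0.
have pow_ge1 t : 0 <= t -> 1 <= (1 + t) ^ d by move=> t_ge0; apply: pow_R1_Rle; Lra.lra.
apply: (@ln_le_of_log_deriv_le (indep_sum n adj) (fun t => 2 * (1 + t) ^ d - 1)
  (indep_sum_deriv n adj) (fun t => 2 * (INR d * (1 + t) ^ Nat.pred d))) => //.
- by move=> t _; apply: derivable_pt_lim_indep_sum.
- by move=> t _; apply: derivable_pt_lim_Kdd_poly.
- move=> t [t_ge0 _]; split; last by have := pow_ge1 t t_ge0; Lra.lra.
  by apply: (Rlt_le_trans _ 1); [Lra.lra | apply/RleP/indep_sum_ge1/RleP].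
- exact: indep_sum0.
- by rewrite Rplus_0_r pow1; Lra.lra.
move=> t [t_gt0 _].
have /RleP := occupancy_ineq adj_sym adj_irr adj_tri card_nbhd (introT RltP t_gt0) d_gt0.
rewrite -!RpowE -!INRE /= -!RmultE -?RminusE -!RplusE -?RoppE -!R1E => occ.
have two_d_ge0 : 0 <= 2 * INR d by have := pos_INR d; Lra.lra.
by have := Rmult_le_compat_l _ _ _ two_d_ge0 occ; Lra.lra.
Qed.

Lemma P_KddE (d : nat) (t : R) : P_Kdd d t = 2 * (1 + t) ^ d - 1.
Proof.
rewrite /P_Kdd indep_polyE indep_sum_Kdd RpowE.
by rewrite -RmultE -?RminusE -!RplusE -?RoppE -!R1E.
Qed.

Lemma indep_poly_ge1 (n : nat) (adj : nat -> nat -> bool) (t : R) :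
  0 <= t -> 1 <= indep_poly n adj t.
Proof. by move=> t_ge0; rewrite indep_polyE; apply/RleP/indep_sum_ge1/RleP. Qed.

Lemma length_indep_sets (n : nat) (adj : nat -> nat -> bool) :
  INR (length (indep_sets n adj)) = indep_poly n adj 1.
Proof.
rewrite /indep_poly; elim: (indep_sets n adj) => [|S l IHl] //.
by rewrite [length _]/= S_INR IHl /= pow1 Rplus_comm.
Qed.

Lemma ln_indep_poly_le (n d : nat) (adj : nat -> nat -> bool) (lam : R) :
  (1 <= d)%coq_nat -> is_simple_graph n adj -> is_regular n d adj -> triangle_free n adj ->
  0 < lam -> 2 * INR d * ln (indep_poly n adj lam) <= INR n * ln (P_Kdd d lam).
Proof.
move=> /ssrnat.leP d_gt0 [adj_sym adj_irr] adj_reg adj_tri lam_gt0.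
rewrite indep_polyE P_KddE; apply: ln_indep_sum_le => //.
- by move=> u v; apply: adj_sym; apply/ssrnat.ltP.
- by move=> u; apply: adj_irr; apply/ssrnat.ltP.
- by move=> u v w uv vw uw; apply: (adj_tri u v w); try apply/ssrnat.ltP.
move=> v; rewrite /nbhd -sum1dep_card -(big_mkord (adj v) (fun _ => 1%N)) sum1_count.
by rewrite /index_iota subn0 -size_filter -filterE -seqE -lengthE adj_reg //; apply/ssrnat.ltP.
Qed.

Theorem mainTheorem9 (d n : nat) (adj : nat -> nat -> bool)
  (hd : (1 <= d)%coq_nat)
  (hG : is_simple_graph n adj)
  (hreg : is_regular n d adj)
  (htf : triangle_free n adj) :
  (forall lam : R, 0 < lam ->
     / INR n * ln (indep_poly n adj lam)
       <= / (2 * INR d) * ln (P_Kdd d lam)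
     /\ / (2 * INR d) * ln (P_Kdd d lam)
        = / (2 * INR d) * ln (2 * (1 + lam) ^ d - 1))
  /\ INR (length (indep_sets n adj))
       <= Rpower (2 ^ (d + 1) - 1) (INR n / (2 * INR d)).
Proof.
have ln_le lam : 0 < lam -> 2 * INR d * ln (indep_poly n adj lam) <= INR n * ln (P_Kdd d lam).
  exact: ln_indep_poly_le.
have two_d_gt0 : 0 < 2 * INR d by have := lt_0_INR d hd; Lra.lra.
have Z_ge1 lam : 0 <= lam -> 1 <= indep_poly n adj lam by apply: indep_poly_ge1.
split=> [lam lam_gt0 | ].
  split; last by rewrite P_KddE.
  apply: Rinv_mul_le_of_mul_le (ln_le lam lam_gt0) => //; last exact: pos_INR.
  rewrite P_KddE; apply: ln_ge0; have := pow_R1_Rle (1 + lam) d; Lra.lra.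
have P_Kdd1 : P_Kdd d 1 = 2 ^ (d + 1) - 1.
  by rewrite P_KddE pow_add pow_1 (_ : 1 + 1 = 2); Lra.lra.
have Z1_gt0 : 0 < indep_poly n adj 1 by have := Z_ge1 1 Rle_0_1; Lra.lra.
rewrite length_indep_sets /Rpower -[indep_poly n adj 1]exp_ln //.
by apply/exp_le_exp/le_Rdiv_mul_of_mul_le; rewrite -?P_Kdd1 //; apply: ln_le Rlt_0_1.
Qed.
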